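(* Fix an integer $s_y\ge 0$. For each integer $t\ge1$ let $A_t$ be the set $I_1\cup I_2\cup I_3\cup T\cup S$ where $Y=[0,s_y]$, $a=4s_y+3$, $I_1=[0,t]\times Y$, $T=[0,(t),at^2-t]\times\{0\}$, $S=[at^2,(t+1),(a+1)t^2-1]\times Y$, $I_2=[2at^2,2at^2+t]\times Y$, $I_3=[(3a+1)t^2,(3a+1)t^2+t]\times Y$. Then $A_t$ is a planar additive basis for $[0,(16s_y+14)t^2-1]\times[0,s_y]$, and its efficiency $c_t=\dfrac{(16s_y+14)t^2(s_y+1)}{|A_t|^2}$ satisfies $$\lim_{t\to\infty}c_t=\frac{2s_y+2}{8s_y+7}.$$
   Context: For integers $a\le b$, $[a,b]$ denotes $\{a,\dots,b\}$. For integers $a\le b$ and $t\ge1$ with $t\mid b-a$, $[a,(t),b]=\{a,a+t,\dots,b\}$. A planar additive basis for $[0,s_x]\times[0,s_y]$ is a set $A$ of points with non-negative integer coordinates with $A+A\supseteq[0,s_x]\times[0,s_y]$ ($A+A$ the vector sumset, summands may coincide); its efficiency is $(s_x+1)(s_y+1)/|A|^2$. *)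

From Stdlib Require Import Reals.
From mathcomp Require Import all_boot.

Set Implicit Arguments.
Unset Strict Implicit.
Unset Printing Implicit Defensive.

Definition ival (a b : nat) : seq nat := iota a (b.+1 - a).

(* [a,(t),b] = {a, a+t, ..., b}: all a + k t with a + k t <= b *)
Definition sval (a t b : nat) : seq nat :=
  [seq a + t * k | k <- iota 0 ((b - a) %/ t).+1].

Definition prodset (X Y : seq nat) : seq (nat * nat) :=
  [seq (x, y) | x <- X, y <- Y].

Definition card_pts (A : seq (nat * nat)) : nat := size (undup A).

Definition planar_basis (A : seq (nat * nat)) (sx sy : nat) : Prop :=
  forall x y, x <= sx -> y <= sy ->
    exists p q, p \in A /\ q \in A /\ p.1 + q.1 = x /\ p.2 + q.2 = y.

Definition efficiency (A : seq (nat * nat)) (sx sy : nat) : R :=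
  Rdiv (INR ((sx + 1) * (sy + 1))) (pow (INR (card_pts A)) 2).

Definition A_t (sy t : nat) : seq (nat * nat) :=
  let Y := ival 0 sy in
  let a := 4 * sy + 3 in
  let I1 := prodset (ival 0 t) Y in
  let T := prodset (sval 0 t (a * t ^ 2 - t)) [:: 0] in
  let S := prodset (sval (a * t ^ 2) (t + 1) ((a + 1) * t ^ 2 - 1)) Y in
  let I2 := prodset (ival (2 * a * t ^ 2) (2 * a * t ^ 2 + t)) Y in
  let I3 := prodset (ival ((3 * a + 1) * t ^ 2) ((3 * a + 1) * t ^ 2 + t)) Y in
  I1 ++ I2 ++ I3 ++ T ++ S.

(* A full block [b, b + t] x Y of A_t
   plus the progression T (step t, a t terms) gives [b, b + a t^2) x Y, and the
   same block plus S (step t + 1, t terms) gives [b + a t^2, b + (a + 1) t^2 + t) x Y;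
   S + T fills the remaining gap [(a + 1) t^2 + t, 2 a t^2) x Y.  With full blocks
   at 0, 2 a t^2 and (3 a + 1) t^2 this covers [0, (4 a + 2) t^2) x Y, and
   4 a + 2 = 16 s_y + 14.  The five pieces lie in disjoint vertical strips except
   that T meets I_1 in the two points (0, 0) and (t, 0), so
   |A_t| = (8 s_y + 7) t + 3 s_y + 1, and the efficiency tends to
   (16 s_y + 14)(s_y + 1) / (8 s_y + 7)^2 = (2 s_y + 2) / (8 s_y + 7). *)

From Pilot Require Import Defs.
From Stdlib Require Import Reals Lra.
From mathcomp Require Import all_boot zify.
From Coquelicot Require Coquelicot.

Set Implicit Arguments.
Unset Strict Implicit.
Unset Printing Implicit Defensive.

Lemma mem_ival a b x : (x \in ival a b) = (a <= x <= b).
Proof. by rewrite /ival mem_iota; apply/idP/idP; lia. Qed.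

Lemma mem_svalP a d b x : 0 < d -> a <= b ->
  reflect (exists2 k, x = a + d * k & a + d * k <= b) (x \in Defs.sval a d b).
Proof.
move=> d_gt0 le_ab; apply: (iffP mapP) => [[k] | [k -> le_kb]].
  by rewrite mem_iota add0n ltnS leq_divRL // => le_k ->; exists k => //; lia.
by exists k => //; rewrite mem_iota add0n ltnS leq_divRL //; lia.
Qed.

Lemma mem_svalS a d b x : 0 < d -> a + d <= b ->
  (x \in Defs.sval a d b) = (x == a) || (x \in Defs.sval (a + d) d b).
Proof.
move=> d_gt0 le_adb; have le_ab : a <= b by lia.
apply/(mem_svalP _ d_gt0 le_ab)/orP => [[[|k] -> le_kb] | [/eqP -> | ]].
- by left; rewrite muln0 addn0.
- by right; apply/mem_svalP => //; exists k; lia.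
- by exists 0; lia.
by case/mem_svalP => // k -> le_kb; exists k.+1; lia.
Qed.

Lemma mem_prodset X Y p : (p \in prodset X Y) = (p.1 \in X) && (p.2 \in Y).
Proof.
case: p => x y; apply/allpairsP/andP => /= [[[u v]] /= [? ? [-> ->]] | []] //.
by exists (x, y).
Qed.

Lemma size_ival a b : size (ival a b) = b.+1 - a.
Proof. exact: size_iota. Qed.

Lemma size_sval a d b : size (Defs.sval a d b) = ((b - a) %/ d).+1.
Proof. by rewrite size_map size_iota. Qed.

Lemma uniq_sval a d b : 0 < d -> uniq (Defs.sval a d b).
Proof.
move=> d_gt0; rewrite map_inj_uniq ?iota_uniq // => k1 k2 /eqP.
by rewrite eqn_add2l eqn_pmul2l // => /eqP.
Qed.

Lemma uniq_prodset X Y : uniq X -> uniq Y -> uniq (prodset X Y).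
Proof. by move=> uX uY; apply: allpairs_uniq => // [[? ?] [? ?]] _ _ [-> ->]. Qed.

Lemma card_pts_uniq_perm A B : uniq B -> A =i B -> card_pts A = size B.
Proof.
move=> uB eqAB; apply/perm_size/uniq_perm; rewrite ?undup_uniq //.
by move=> p; rewrite mem_undup eqAB.
Qed.

Definition in_sumset (A : seq (nat * nat)) (x y : nat) : Prop :=
  exists p q, p \in A /\ q \in A /\ p.1 + q.1 = x /\ p.2 + q.2 = y.

Definition strip_block (l h : nat) (A : seq (nat * nat)) : bool :=
  uniq A && all (fun p => l <= p.1 <= h) A.

Lemma strip_block_cat l1 h1 l2 h2 X Y :
  strip_block l1 h1 X -> strip_block l2 h2 Y -> l1 <= h1 < l2 -> l2 <= h2 ->
  strip_block l1 h2 (X ++ Y).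
Proof.
move=> /andP[uX /allP xX] /andP[uY /allP xY] lt12 le_l2h2.
rewrite /strip_block cat_uniq uX uY all_cat /= andbT; apply/and3P; split.
- by apply/hasPn => p /xY pY; apply/negP => /xX; lia.
- by apply/allP => p /xX; lia.
- by apply/allP => p /xY; lia.
Qed.

Lemma strip_block_ival l h Y : uniq Y -> strip_block l h (prodset (ival l h) Y).
Proof.
move=> uY; rewrite /strip_block uniq_prodset ?iota_uniq //=.
by apply/allP => p; rewrite mem_prodset mem_ival => /andP[].
Qed.

Lemma strip_block_sval l d h Y : 0 < d -> l <= h -> uniq Y ->
  strip_block l h (prodset (Defs.sval l d h) Y).
Proof.
move=> d_gt0 le_lh uY; rewrite /strip_block uniq_prodset ?uniq_sval //=.
apply/allP => p; rewrite mem_prodset.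
by case/andP=> /(mem_svalP _ d_gt0 le_lh) [k -> le_k] _; lia.
Qed.

Section A_t_properties.
Variables s t : nat.
Hypothesis t_gt0 : 0 < t.
Let a := 4 * s + 3.

Lemma mem_A_t p : p \in A_t s t =
  [|| (p.1 \in ival 0 t) && (p.2 \in ival 0 s),
      (p.1 \in ival (2 * a * t ^ 2) (2 * a * t ^ 2 + t)) && (p.2 \in ival 0 s),
      (p.1 \in ival ((3 * a + 1) * t ^ 2) ((3 * a + 1) * t ^ 2 + t)) && (p.2 \in ival 0 s),
      (p.1 \in Defs.sval 0 t (a * t ^ 2 - t)) && (p.2 == 0) |
      (p.1 \in Defs.sval (a * t ^ 2) (t + 1) ((a + 1) * t ^ 2 - 1)) && (p.2 \in ival 0 s)].
Proof. by rewrite !(mem_cat, mem_prodset) mem_seq1. Qed.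

Definition full_block b := forall r y, r <= t -> y <= s -> (b + r, y) \in A_t s t.

Lemma full_block_I1 : full_block 0.
Proof. by move=> r y le_rt le_ys; rewrite mem_A_t /= !mem_ival add0n le_rt le_ys. Qed.

Lemma full_block_I2 : full_block (2 * a * t ^ 2).
Proof. move=> r y le_rt le_ys; rewrite mem_A_t /= !mem_ival le_ys; lia. Qed.

Lemma full_block_I3 : full_block ((3 * a + 1) * t ^ 2).
Proof. move=> r y le_rt le_ys; rewrite mem_A_t /= !mem_ival le_ys; lia. Qed.

Lemma mem_A_t_T k : t * k <= a * t ^ 2 - t -> (t * k, 0) \in A_t s t.
Proof.
move=> le_k; have T_k : t * k \in Defs.sval 0 t (a * t ^ 2 - t).
  by apply/mem_svalP => //; exists k.
by rewrite mem_A_t /= T_k eqxx !orbT.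
Qed.

Lemma mem_A_t_S k y : k < t -> y <= s -> (a * t ^ 2 + (t + 1) * k, y) \in A_t s t.
Proof.
move=> lt_kt le_ys.
have S_k : a * t ^ 2 + (t + 1) * k \in Defs.sval (a * t ^ 2) (t + 1) ((a + 1) * t ^ 2 - 1).
  by apply/mem_svalP; [rewrite addn1 | nia | exists k => //; nia].
by rewrite mem_A_t /= S_k !mem_ival /= le_ys !orbT.
Qed.

Lemma in_sumset_block_T b : full_block b -> forall x y,
  b <= x < b + a * t ^ 2 -> y <= s -> in_sumset (A_t s t) x y.
Proof.
move=> Ib x y le_x le_ys; have := divn_eq (x - b) t; have := ltn_pmod (x - b) t_gt0.
set q := (x - b) %/ t; set r := (x - b) %% t => lt_rt def_x.
have lt_q : q < a * t by nia.
exists (b + r, y), (t * q, 0); split; first by apply: Ib; lia.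
by split; [apply: mem_A_t_T; nia | split=> /=; lia].
Qed.

Lemma in_sumset_block_S b : full_block b -> forall x y,
  b + a * t ^ 2 <= x < b + a * t ^ 2 + t * (t + 1) -> y <= s ->
  in_sumset (A_t s t) x y.
Proof.
move=> Ib x y le_x le_ys; have t1_gt0 : 0 < t + 1 by rewrite addn1.
have := divn_eq (x - b - a * t ^ 2) (t + 1); have := ltn_pmod (x - b - a * t ^ 2) t1_gt0.
set k := _ %/ _; set r := _ %% _ => lt_rt def_x.
have lt_kt : k < t by nia.
exists (a * t ^ 2 + (t + 1) * k, y), (b + r, 0); split; first exact: mem_A_t_S lt_kt le_ys.
by split; [apply: Ib; lia | split=> /=; lia].
Qed.

Lemma in_sumset_S_T x y : a * t ^ 2 + t * (t + 1) <= x < 2 * a * t ^ 2 -> y <= s ->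
  in_sumset (A_t s t) x y.
Proof.
move=> le_x le_ys; have := divn_eq (x - a * t ^ 2) t; have := ltn_pmod (x - a * t ^ 2) t_gt0.
set q := _ %/ _; set r := _ %% _ => lt_rt def_x.
have /andP[lt_tq lt_q] : t < q < a * t by apply/andP; split; nia.
exists (a * t ^ 2 + (t + 1) * r, y), (t * (q - r), 0); split; first exact: mem_A_t_S lt_rt le_ys.
by split; [apply: mem_A_t_T; nia | split=> /=; nia].
Qed.

Lemma A_t_basis : planar_basis (A_t s t) ((16 * s + 14) * t ^ 2 - 1) s.
Proof.
move=> x y le_x le_ys; change (in_sumset (A_t s t) x y).
have {}le_x : x < (4 * a + 2) * t ^ 2 by rewrite /a; nia.
case: (ltnP x (a * t ^ 2)) => [lt1|le1].
  by apply: (in_sumset_block_T full_block_I1); lia.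
case: (ltnP x (a * t ^ 2 + t * (t + 1))) => [lt2|le2].
  by apply: (in_sumset_block_S full_block_I1); lia.
case: (ltnP x (2 * a * t ^ 2)) => [lt3|le3].
  by apply: in_sumset_S_T; lia.
case: (ltnP x (3 * a * t ^ 2)) => [lt4|le4].
  by apply: (in_sumset_block_T full_block_I2); lia.
case: (ltnP x ((3 * a + 1) * t ^ 2)) => [lt5|le5].
  by apply: (in_sumset_block_S full_block_I2); nia.
case: (ltnP x ((4 * a + 1) * t ^ 2)) => [lt6|le6].
  by apply: (in_sumset_block_T full_block_I3); lia.
by apply: (in_sumset_block_S full_block_I3); nia.
Qed.

(* A_t without the points (0, 0) and (t, 0) of T, which already lie in I_1,
   listed strip by strip from left to right. *)
Definition A_t_strips :=
  prodset (ival 0 t) (ival 0 s) ++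
  prodset (Defs.sval (2 * t) t (a * t ^ 2 - t)) [:: 0] ++
  prodset (Defs.sval (a * t ^ 2) (t + 1) ((a + 1) * t ^ 2 - 1)) (ival 0 s) ++
  prodset (ival (2 * a * t ^ 2) (2 * a * t ^ 2 + t)) (ival 0 s) ++
  prodset (ival ((3 * a + 1) * t ^ 2) ((3 * a + 1) * t ^ 2 + t)) (ival 0 s).

Lemma mem_A_t_strips : A_t s t =i A_t_strips.
Proof.
have le_t : 0 + t <= a * t ^ 2 - t by rewrite /a; nia.
have le_2t : t + t <= a * t ^ 2 - t by rewrite /a; nia.
move=> [x y]; rewrite mem_A_t !(mem_cat, mem_prodset) /= (mem_svalS _ t_gt0 le_t).
rewrite (mem_svalS _ t_gt0 le_2t) addnn -mul2n !mem_ival mem_seq1.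
by case: (x \in Defs.sval (2 * t) _ _); case: (x \in Defs.sval (a * t ^ 2) _ _);
  apply/idP/idP; lia.
Qed.

Lemma uniq_A_t_strips : uniq A_t_strips.
Proof.
have uY : uniq (ival 0 s) by exact: iota_uniq.
have t1_gt0 : 0 < t + 1 by rewrite addn1.
suff /andP[] : strip_block 0 ((3 * a + 1) * t ^ 2 + t) A_t_strips by [].
apply: (strip_block_cat (strip_block_ival 0 t uY)
  (strip_block_cat (@strip_block_sval (2 * t) t (a * t ^ 2 - t) [:: 0] t_gt0 _ _)
  (strip_block_cat (@strip_block_sval (a * t ^ 2) _ ((a + 1) * t ^ 2 - 1) _ t1_gt0 _ uY)
  (strip_block_cat (strip_block_ival _ _ uY) (strip_block_ival _ _ uY)
  _ _) _ _) _ _) _ _) => //; rewrite /a; nia.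
Qed.

Lemma size_A_t_strips : size A_t_strips = t * (8 * s + 7) + 3 * s + 1.
Proof.
have at3 : 3 <= a * t by rewrite /a; nia.
have T_div : (a * t ^ 2 - t - 2 * t) %/ t = a * t - 3.
  by rewrite (_ : _ - _ = (a * t - 3) * t) ?mulnK //; nia.
have S_div : ((a + 1) * t ^ 2 - 1 - a * t ^ 2) %/ (t + 1) = t - 1.
  by rewrite (_ : _ - _ = (t - 1) * (t + 1)) ?mulnK ?addn1 //; nia.
rewrite 4!size_cat !size_allpairs !size_sval T_div S_div !size_ival.
rewrite !subn0 -!addnS !addKn /= muln1 (_ : (t - 1).+1 = t); last by lia.
rewrite /a in at3 *; nia.
Qed.

Lemma card_A_t : card_pts (A_t s t) = t * (8 * s + 7) + 3 * s + 1.
Proof.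
by rewrite -size_A_t_strips; apply: card_pts_uniq_perm uniq_A_t_strips mem_A_t_strips.
Qed.

End A_t_properties.

Section Limit.
Import Coquelicot.Coquelicot.
Local Open Scope R_scope.

Lemma cv_sq_ratio (K C D : R) : 0 < C -> 0 <= D ->
  Un_cv (fun n => K * INR n.+1 ^ 2 / (C * INR n.+1 + D) ^ 2) (K / C ^ 2).
Proof.
move=> C_gt0 D_ge0; apply/is_lim_seq_Reals.
have inv_cv : is_lim_seq (fun n => / INR n.+1) 0.
  by apply/(is_lim_seq_incr_1 (fun n => / INR n))/(is_lim_seq_inv _ _ is_lim_seq_INR).
have den_cv : is_lim_seq (fun n => (C + D * / INR n.+1) * (C + D * / INR n.+1)) (C * C).
  have := is_lim_seq_mult' _ _ _ _ (is_lim_seq_plus' _ _ C (D * 0) (is_lim_seq_const C)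
    (is_lim_seq_scal_l _ D 0 inv_cv)) (is_lim_seq_plus' _ _ C (D * 0) (is_lim_seq_const C)
    (is_lim_seq_scal_l _ D 0 inv_cv)).
  by rewrite Rmult_0_r Rplus_0_r.
have CC_neq0 : C * C <> 0 by nra.
have := is_lim_seq_div' _ _ K (C * C) (is_lim_seq_const K) den_cv CC_neq0.
rewrite (_ : K / (C * C) = K / C ^ 2); last by rewrite /= Rmult_1_r.
apply: is_lim_seq_ext => n.
have n_gt0 : 0 < INR n.+1 by apply: lt_0_INR; lia.
by field; nra.
Qed.

Lemma efficiency_A_t s t : (0 < t)%N ->
  efficiency (A_t s t) ((16 * s + 14) * t ^ 2 - 1) s =
  INR ((16 * s + 14) * (s + 1)) * INR t ^ 2 /
  (INR (8 * s + 7) * INR t + INR (3 * s + 1)) ^ 2.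
Proof.
move=> t_gt0; rewrite /efficiency card_A_t // subnK; last first.
  by rewrite muln_gt0 addn_gt0 orbT expn_gt0 t_gt0.
rewrite mulnAC mult_INR -addnA plus_INR (mult_INR t (8 * s + 7)).
by rewrite (Rmult_comm (INR t)); congr (_ * _ / _); rewrite -mulnn mult_INR; ring.
Qed.

Lemma cv_efficiency_A_t s :
  Un_cv (fun n => efficiency (A_t s n.+1) ((16 * s + 14) * n.+1 ^ 2 - 1) s)
        (INR (2 * s + 2) / INR (8 * s + 7)).
Proof.
have C_gt0 : 0 < INR (8 * s + 7) by apply: lt_0_INR; lia.
have lim := cv_sq_ratio (INR ((16 * s + 14) * (s + 1))) C_gt0 (pos_INR (3 * s + 1)).
rewrite (_ : _ / _ = INR ((16 * s + 14) * (s + 1)) / INR (8 * s + 7) ^ 2).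
  by apply: Un_cv_ext lim => n; rewrite efficiency_A_t.
rewrite (_ : (16 * s + 14) * (s + 1) = (2 * s + 2) * (8 * s + 7))%N ?mult_INR; last by nia.
by field; lra.
Qed.

End Limit.

Theorem mainTheorem14 (sy : nat) :
  (forall t : nat, 1 <= t ->
     planar_basis (A_t sy t) ((16 * sy + 14) * t ^ 2 - 1) sy) /\
  Un_cv (fun n : nat =>
           efficiency (A_t sy n.+1) ((16 * sy + 14) * n.+1 ^ 2 - 1) sy)
        (Rdiv (INR (2 * sy + 2)) (INR (8 * sy + 7))).
Proof. by split; [exact: A_t_basis | exact: cv_efficiency_A_t]. Qed.
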